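(* Fix integers $1\le j<k$ and constants $0<\delta<1/6$ and $c>0$. Let $\varepsilon=\varepsilon(n)$ satisfy $\varepsilon\to0$, $\varepsilon^3n^j\to\infty$, $\varepsilon^2n^{1-2\delta}\to\infty$, let $p=(1+\varepsilon)p_0$ with $p_0=\frac{1}{(\binom{k}{j}-1)\binom{n}{k-j}}$, and let $\varepsilon_*=\varepsilon_*(n)$ satisfy $n^{-1/2+\delta}\ll\varepsilon_*\ll\varepsilon$. Let $\mathcal{T}_*$ be the Galton–Watson branching process starting from one individual in which each individual independently has $\left(\binom{k}{j}-1\right)\cdot Z$ children, where $Z\sim\mathrm{Bi}\!\left((1-\varepsilon_* )\binom{n}{k-j},p\right)$. Let $x:=(j-1+\delta+c)\varepsilon^{-1}\log n$ and let $|\mathcal{T}_*(x)|$ be the size of generation $x$ of $\mathcal{T}_*$. Then, for $n$ sufficiently large, $\Pr\big(|\mathcal{T}_*(x)|\ge n^{j-1+\delta}\big)\ge\varepsilon/n^{c}$.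
   Context: Floors and ceilings are omitted where irrelevant (e.g. $x$ and $(1-\varepsilon_* )\binom{n}{k-j}$ are rounded to integers). The notation $a\cdot Z$ means the random variable taking value $ai$ with probability $\Pr(Z=i)$. *)

From Stdlib Require Import Reals Lra ZArith.
From Coquelicot Require Import Coquelicot.
Open Scope R_scope.

Fixpoint binom (n k : nat) : nat :=
  match n, k with
  | _, O => 1%nat
  | O, S _ => 0%nat
  | S n', S k' => (binom n' k' + binom n' (S k'))%nat
  end.

Definition binom_pmf (N : nat) (p : R) (i : nat) : R :=
  INR (binom N i) * p ^ i * (1 - p) ^ (N - i).

Definition offspring_pmf (a N : nat) (p : R) (i : nat) : R :=
  sum_f_R0 (fun z => if Nat.eqb (a * z) i then binom_pmf N p z else 0) N.

Definition conv (f g : nat -> R) (n : nat) : R :=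
  sum_f_R0 (fun i => f i * g (n - i)%nat) n.

Fixpoint convpow (f : nat -> R) (m : nat) : nat -> R :=
  match m with
  | O => fun n => if Nat.eqb n 0 then 1 else 0
  | S m' => conv f (convpow f m')
  end.

(* Since each
   individual has at most a*N children, generation t has at most (a*N)^t
   individuals, so the sum over the previous generation size is exact. *)
Fixpoint gw_gen (a N : nat) (p : R) (t : nat) : nat -> R :=
  match t with
  | O => fun n => if Nat.eqb n 1 then 1 else 0
  | S t' => fun n =>
      sum_f_R0 (fun m => gw_gen a N p t' m * convpow (offspring_pmf a N p) m n)
               ((a * N) ^ t')
  end.

Definition gw_tail (a N : nat) (p : R) (t : nat) (y : R) : R :=
  sum_f_R0 (fun i => if Rle_dec y (INR i) then gw_gen a N p t i else 0)
           ((a * N) ^ t).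

From Stdlib Require Import Reals Lra Lia ZArith.
From Coquelicot Require Import Coquelicot.
Open Scope R_scope.

(* Paley-Zygmund applied to generation [x]. With [th := c / (4 (j - 1 + delta + c))], for
   large [n] the offspring mean [A = a N p] lies in [[1 + (1 - th) eps, 1 + eps]]; generation
   [x] has mean [A^x] and second moment at most [A^(2x) (1 + a / (A - 1))], so it reaches
   [A^x / 2] with probability at least [(A - 1) / (4 (A - 1 + a)) >= eps / (8 (1 + a))].
   Since [ln A >= (1 - 2 th) eps], after [x ~ (j - 1 + delta + c) ln n / eps] generations
   [A^x >= 2 n^(j-1+delta)], while [8 (1 + a) <= n^c]. *)

Lemma sum_f_R0_supported (f : nat -> R) K K' :
  (forall i, (K < i)%nat -> f i = 0) -> (K <= K')%nat -> sum_f_R0 f K' = sum_f_R0 f K.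
Proof.
  intros Hf HK; induction HK as [|K' HK IH]; [reflexivity|].
  simpl; rewrite IH, (Hf (S K')) by lia; ring.
Qed.

Lemma sum_f_R0_scal_l c (f : nat -> R) n :
  sum_f_R0 (fun i => c * f i) n = c * sum_f_R0 f n.
Proof. rewrite scal_sum; apply sum_eq; intros; ring. Qed.

Lemma sum_f_R0_comm (F : nat -> nat -> R) n m :
  sum_f_R0 (fun i => sum_f_R0 (fun l => F i l) m) n =
  sum_f_R0 (fun l => sum_f_R0 (fun i => F i l) n) m.
Proof.
  induction n as [|n IH]; simpl; [reflexivity|].
  rewrite IH, <- plus_sum; reflexivity.
Qed.

Lemma sum_f_R0_triangle (F : nat -> nat -> R) K :
  sum_f_R0 (fun n => sum_f_R0 (fun i => F i (n - i)%nat) n) K =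
  sum_f_R0 (fun i => sum_f_R0 (fun l => F i l) (K - i)) K.
Proof.
  induction K as [|K IH]; [reflexivity|].
  rewrite tech5, IH.
  rewrite (tech5 (fun i => sum_f_R0 (fun l => F i l) (S K - i)) K).
  rewrite (tech5 (fun i => F i (S K - i)%nat) K), Nat.sub_diag; simpl (sum_f_R0 _ 0).
  rewrite (sum_eq (fun i => sum_f_R0 (fun l => F i l) (S K - i))
                  (fun i => sum_f_R0 (fun l => F i l) (K - i) + F i (S K - i)%nat)).
  - rewrite plus_sum; ring.
  - intros i Hi; replace (S K - i)%nat with (S (K - i)) by lia; apply tech5.
Qed.

Lemma sum_f_R0_indicator (t K : nat) (v : nat -> R) : (t <= K)%nat ->
  sum_f_R0 (fun i => if Nat.eqb t i then v i else 0) K = v t.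
Proof.
  intros Ht; induction K as [|K IH].
  - replace t with 0%nat by lia; reflexivity.
  - rewrite tech5; destruct (Nat.eqb_spec t (S K)) as [->|Hne].
    + rewrite sum_eq_R0; [ring|].
      intros i Hi; destruct (Nat.eqb_spec (S K) i); [lia|reflexivity].
    + rewrite IH by lia; ring.
Qed.

Definition supported (f : nat -> R) (K : nat) : Prop := forall i, (K < i)%nat -> f i = 0.

Definition expect (f : nat -> R) (K : nat) (h : nat -> R) : R :=
  sum_f_R0 (fun i => h i * f i) K.

Lemma expect_ext f K h1 h2 : (forall i, h1 i = h2 i) -> expect f K h1 = expect f K h2.
Proof. intros H; apply sum_eq; intros; rewrite H; reflexivity. Qed.

Lemma expect_plus f K h1 h2 :
  expect f K (fun i => h1 i + h2 i) = expect f K h1 + expect f K h2.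
Proof. unfold expect; rewrite <- plus_sum; apply sum_eq; intros; ring. Qed.

Lemma expect_scal f K c h : expect f K (fun i => c * h i) = c * expect f K h.
Proof. unfold expect; rewrite <- sum_f_R0_scal_l; apply sum_eq; intros; ring. Qed.

Lemma expect_const f K c : expect f K (fun _ => c) = c * expect f K (fun _ => 1).
Proof. rewrite <- expect_scal; apply expect_ext; intros; ring. Qed.

Lemma expect_conv f g Kf Kg h : supported f Kf -> supported g Kg ->
  expect (conv f g) (Kf + Kg) h =
  expect f Kf (fun i => expect g Kg (fun l => h (i + l)%nat)).
Proof.
  intros Hf Hg; set (F := fun i l => h (i + l)%nat * g l * f i).
  unfold expect, conv.
  rewrite (sum_eq _ (fun n => sum_f_R0 (fun i => F i (n - i)%nat) n)).
  2:{ intros n _; rewrite <- sum_f_R0_scal_l; apply sum_eq; intros i Hi.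
      unfold F; replace (i + (n - i))%nat with n by lia; ring. }
  rewrite sum_f_R0_triangle, (sum_f_R0_supported _ Kf).
  - apply sum_eq; intros i Hi; rewrite Rmult_comm, scal_sum.
    apply sum_f_R0_supported; [|lia].
    intros l Hl; unfold F; rewrite Hg by lia; ring.
  - intros i Hi; apply sum_eq_R0; intros l _; unfold F; rewrite Hf by lia; ring.
  - lia.
Qed.

Definition mass (f : nat -> R) (K : nat) : R := expect f K (fun _ => 1).
Definition mean (f : nat -> R) (K : nat) : R := expect f K INR.
Definition moment2 (f : nat -> R) (K : nat) : R := expect f K (fun i => INR i ^ 2).

Lemma conv_supported f g Kf Kg :
  supported f Kf -> supported g Kg -> supported (conv f g) (Kf + Kg).
Proof.
  intros Hf Hg n Hn; apply sum_eq_R0; intros i Hi.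
  destruct (Nat.le_gt_cases i Kf).
  - rewrite (Hg (n - i)%nat) by lia; ring.
  - rewrite Hf by lia; ring.
Qed.

Lemma conv_moments f g Kf Kg : supported f Kf -> supported g Kg ->
  mass (conv f g) (Kf + Kg) = mass f Kf * mass g Kg /\
  mean (conv f g) (Kf + Kg) = mean f Kf * mass g Kg + mass f Kf * mean g Kg /\
  moment2 (conv f g) (Kf + Kg) =
    moment2 f Kf * mass g Kg + 2 * (mean f Kf * mean g Kg) + mass f Kf * moment2 g Kg.
Proof.
  intros Hf Hg; unfold mass, mean, moment2; rewrite !expect_conv by assumption.
  split; [|split].
  - rewrite expect_const, Rmult_comm; reflexivity.
  - rewrite (expect_ext f Kf _ (fun i => expect g Kg (fun _ => 1) * INR i
                                    + expect g Kg INR * 1)).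
    + rewrite expect_plus, !expect_scal; ring.
    + intros i; rewrite (expect_ext g Kg _ (fun l => INR i * 1 + INR l)).
      * rewrite expect_plus, expect_scal; ring.
      * intros l; rewrite plus_INR; ring.
  - rewrite (expect_ext f Kf _ (fun i => expect g Kg (fun _ => 1) * INR i ^ 2
                 + (2 * expect g Kg INR * INR i + expect g Kg (fun l => INR l ^ 2) * 1))).
    + rewrite !expect_plus, !expect_scal; ring.
    + intros i; rewrite (expect_ext g Kg _
                  (fun l => INR i ^ 2 * 1 + (2 * INR i * INR l + INR l ^ 2))).
      * rewrite !expect_plus, !expect_scal; ring.
      * intros l; rewrite plus_INR; ring.
Qed.

Lemma convpow_moments f K A B :
  supported f K -> mass f K = 1 -> mean f K = A -> moment2 f K = B ->
  forall m, supported (convpow f m) (m * K) /\ mass (convpow f m) (m * K) = 1 /\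
    mean (convpow f m) (m * K) = INR m * A /\
    moment2 (convpow f m) (m * K) = INR m * B + INR m * (INR m - 1) * A ^ 2.
Proof.
  intros Hs H0 H1 H2 m; induction m as [|m (Ss & S0 & S1 & S2)].
  - unfold mass, mean, moment2, expect; simpl.
    repeat split; try ring.
    intros [|i] Hi; [lia|reflexivity].
  - change (S m * K)%nat with (K + m * K)%nat; simpl convpow.
    destruct (conv_moments _ _ _ _ Hs Ss) as (C0 & C1 & C2).
    rewrite C0, C1, C2, H0, H1, H2, S0, S1, S2, S_INR.
    repeat split; try ring.
    apply conv_supported; assumption.
Qed.

Lemma convpow_nonneg f : (forall i, 0 <= f i) -> forall m n, 0 <= convpow f m n.
Proof.
  intros Hf m; induction m as [|m IH]; intros n; simpl.
  - destruct (n =? 0)%nat; lra.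
  - apply cond_pos_sum; intros; apply Rmult_le_pos; auto.
Qed.

Lemma binom_0_r n : binom n 0 = 1%nat.
Proof. destruct n; reflexivity. Qed.

Lemma binom_gt n k : (n < k)%nat -> binom n k = 0%nat.
Proof.
  revert k; induction n as [|n IH]; intros [|k] Hk; simpl; try lia; try reflexivity.
  rewrite !IH by lia; reflexivity.
Qed.

Lemma binom_1_r n : binom n 1 = n.
Proof. induction n as [|n IH]; simpl; [reflexivity | rewrite binom_0_r, IH; reflexivity]. Qed.

Lemma binom_pos n d : (d <= n)%nat -> (1 <= binom n d)%nat.
Proof.
  revert d; induction n as [|n IH]; intros [|d] Hd; simpl; try lia.
  specialize (IH d ltac:(lia)); lia.
Qed.

Lemma binom_ge n d : (1 <= d)%nat -> (d < n)%nat -> (n <= binom n d)%nat.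
Proof.
  revert d; induction n as [|n IH]; intros [|[|d]] H1 H2; simpl; try lia.
  - rewrite binom_0_r, binom_1_r; lia.
  - specialize (IH (S d) ltac:(lia) ltac:(lia)).
    pose proof (binom_pos n (S (S d)) ltac:(lia)); lia.
Qed.

Definition succ_pmf (f : nat -> R) (z : nat) : R :=
  match z with O => 0 | S z' => f z' end.

Lemma binom_pmf_succ N p z :
  binom_pmf (S N) p z = p * succ_pmf (binom_pmf N p) z + (1 - p) * binom_pmf N p z.
Proof.
  unfold binom_pmf; destruct z as [|z]; simpl succ_pmf.
  - rewrite !binom_0_r, !Nat.sub_0_r; simpl; ring.
  - simpl binom; rewrite plus_INR; simpl (S N - S z)%nat.
    destruct (Nat.lt_ge_cases z N).
    + replace (N - z)%nat with (S (N - S z)) by lia; simpl; ring.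
    + rewrite (binom_gt N (S z)) by lia; simpl; ring.
Qed.

Lemma binom_pmf_nonneg N p z : 0 <= p <= 1 -> 0 <= binom_pmf N p z.
Proof.
  intros Hp; unfold binom_pmf.
  apply Rmult_le_pos; [apply Rmult_le_pos; [apply pos_INR|]|]; apply pow_le; lra.
Qed.

Lemma binom_pmf_supported N p : supported (binom_pmf N p) N.
Proof. intros z Hz; unfold binom_pmf; rewrite binom_gt by lia; simpl; ring. Qed.

Lemma expect_binom_succ h N p :
  expect (binom_pmf (S N) p) (S N) h =
  p * expect (binom_pmf N p) N (fun z => h (S z)) + (1 - p) * expect (binom_pmf N p) N h.
Proof.
  unfold expect.
  rewrite <- (sum_f_R0_supported (fun z => h z * binom_pmf N p z) N (S N)) by
    (lia || (intros z Hz; rewrite binom_pmf_supported by lia; ring)).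
  rewrite <- !sum_f_R0_scal_l.
  rewrite (sum_eq _ (fun z => p * (h z * succ_pmf (binom_pmf N p) z)
                              + (1 - p) * (h z * binom_pmf N p z)))
    by (intros; rewrite binom_pmf_succ; ring).
  rewrite plus_sum, decomp_sum by lia; simpl; ring.
Qed.

Lemma binom_moments N p :
  mass (binom_pmf N p) N = 1 /\ mean (binom_pmf N p) N = INR N * p /\
  moment2 (binom_pmf N p) N = INR N * p * (1 - p) + (INR N * p) ^ 2.
Proof.
  unfold mass, mean, moment2.
  induction N as [|N (I0 & I1 & I2)].
  - unfold expect, binom_pmf; simpl; repeat split; ring.
  - rewrite !expect_binom_succ.
    rewrite (expect_ext _ _ (fun z => INR (S z)) (fun z => INR z + 1))
      by (intros; apply S_INR).
    rewrite (expect_ext _ _ (fun z => INR (S z) ^ 2) (fun z => INR z ^ 2 + 2 * INR z + 1))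
      by (intros; rewrite S_INR; ring).
    rewrite !expect_plus, expect_scal, I0, I1, I2, S_INR.
    repeat split; ring.
Qed.

Lemma expect_offspring a N p h :
  expect (offspring_pmf a N p) (a * N) h = expect (binom_pmf N p) N (fun z => h (a * z)%nat).
Proof.
  unfold expect, offspring_pmf.
  rewrite (sum_eq _ (fun i => sum_f_R0 (fun z =>
             if Nat.eqb (a * z) i then h i * binom_pmf N p z else 0) N)).
  2:{ intros i _; rewrite <- sum_f_R0_scal_l; apply sum_eq; intros z _.
      destruct (Nat.eqb (a * z) i); ring. }
  rewrite sum_f_R0_comm; apply sum_eq; intros z Hz.
  apply (sum_f_R0_indicator (a * z) (a * N) (fun i => h i * binom_pmf N p z)); nia.
Qed.

Lemma offspring_supported a N p : supported (offspring_pmf a N p) (a * N).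
Proof.
  intros i Hi; apply sum_eq_R0; intros z Hz.
  destruct (Nat.eqb_spec (a * z) i); [nia|reflexivity].
Qed.

Lemma offspring_nonneg a N p : 0 <= p <= 1 -> forall i, 0 <= offspring_pmf a N p i.
Proof.
  intros Hp i; apply cond_pos_sum; intros z.
  destruct (Nat.eqb (a * z) i); [apply binom_pmf_nonneg; assumption | lra].
Qed.

Lemma offspring_moments a N p :
  mass (offspring_pmf a N p) (a * N) = 1 /\
  mean (offspring_pmf a N p) (a * N) = INR a * (INR N * p) /\
  moment2 (offspring_pmf a N p) (a * N) =
    INR a ^ 2 * (INR N * p * (1 - p) + (INR N * p) ^ 2).
Proof.
  destruct (binom_moments N p) as (I0 & I1 & I2).
  unfold mass, mean, moment2 in *; rewrite !expect_offspring.
  rewrite (expect_ext _ _ (fun z => INR (a * z)) (fun z => INR a * INR z))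
    by (intros; apply mult_INR).
  rewrite (expect_ext _ _ (fun z => INR (a * z) ^ 2) (fun z => INR a ^ 2 * INR z ^ 2))
    by (intros; rewrite mult_INR; ring).
  rewrite !expect_scal, I0, I1, I2; repeat split.
Qed.

Section GaltonWatson.
Variables (a N : nat) (p : R).

Let K := (a * N)%nat.
Let off := offspring_pmf a N p.
Let A := INR a * (INR N * p).
Let B := INR a ^ 2 * (INR N * p * (1 - p) + (INR N * p) ^ 2).

Lemma convpow_offspring_moments m :
  supported (convpow off m) (m * K) /\ mass (convpow off m) (m * K) = 1 /\
  mean (convpow off m) (m * K) = INR m * A /\
  moment2 (convpow off m) (m * K) = INR m * B + INR m * (INR m - 1) * A ^ 2.
Proof.
  destruct (offspring_moments a N p) as (H0 & H1 & H2).
  apply convpow_moments; [apply offspring_supported | assumption ..].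
Qed.

Lemma expect_gw_succ h t :
  expect (gw_gen a N p (S t)) (K ^ S t) h =
  expect (gw_gen a N p t) (K ^ t) (fun m => expect (convpow off m) (m * K) h).
Proof.
  unfold expect; simpl gw_gen; fold K off.
  rewrite (sum_eq _ (fun n => sum_f_R0 (fun m =>
             h n * convpow off m n * gw_gen a N p t m) (K ^ t)))
    by (intros; rewrite <- sum_f_R0_scal_l; apply sum_eq; intros; ring).
  rewrite sum_f_R0_comm; apply sum_eq; intros m Hm.
  rewrite Rmult_comm, scal_sum; apply sum_f_R0_supported.
  - intros i Hi; destruct (convpow_offspring_moments m) as [Hs _]; rewrite Hs by lia; ring.
  - simpl; nia.
Qed.

Lemma gw_gen_nonneg : 0 <= p <= 1 -> forall t n, 0 <= gw_gen a N p t n.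
Proof.
  intros Hp t; induction t as [|t IH]; intros n; simpl.
  - destruct (n =? 1)%nat; lra.
  - apply cond_pos_sum; intros m; apply Rmult_le_pos; [apply IH|].
    apply convpow_nonneg, offspring_nonneg; assumption.
Qed.

Lemma gw_mass_mean t : mass (gw_gen a N p t) (K ^ t) = 1 /\ mean (gw_gen a N p t) (K ^ t) = A ^ t.
Proof.
  unfold mass, mean; induction t as [|t [I0 I1]].
  - unfold expect; simpl; split; ring.
  - rewrite !expect_gw_succ; split.
    + rewrite (expect_ext _ _ _ (fun _ => 1)); [exact I0|].
      intros m; apply (convpow_offspring_moments m).
    + rewrite (expect_ext _ _ _ (fun m => A * INR m)), expect_scal, I1; [simpl; ring|].
      intros m; destruct (convpow_offspring_moments m) as (_ & _ & C1 & _).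
      unfold mean in C1; rewrite C1; ring.
Qed.

Lemma gw_moment2_succ t :
  moment2 (gw_gen a N p (S t)) (K ^ S t) =
  (B - A ^ 2) * A ^ t + A ^ 2 * moment2 (gw_gen a N p t) (K ^ t).
Proof.
  destruct (gw_mass_mean t) as [_ I1]; unfold mean, moment2 in *.
  rewrite expect_gw_succ, (expect_ext _ _ _
    (fun m => (B - A ^ 2) * INR m + A ^ 2 * INR m ^ 2)).
  - rewrite expect_plus, !expect_scal, I1; reflexivity.
  - intros m; destruct (convpow_offspring_moments m) as (_ & _ & _ & C2).
    unfold moment2 in C2; rewrite C2; ring.
Qed.

Lemma gw_moment2_le v : B - A ^ 2 = v * A * (A - 1) -> 0 <= v ->
  forall t, moment2 (gw_gen a N p t) (K ^ t) <= (A ^ t) ^ 2 * (1 + v) - v * A ^ t.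
Proof.
  intros Hv Hv0 t; induction t as [|t IH].
  - unfold moment2, expect; simpl; lra.
  - rewrite gw_moment2_succ, Hv.
    assert (HA2 : 0 <= A ^ 2) by apply pow2_ge_0.
    apply Rle_trans with (v * A * (A - 1) * A ^ t + A ^ 2 * ((A ^ t) ^ 2 * (1 + v) - v * A ^ t)).
    + apply Rplus_le_compat_l, Rmult_le_compat_l; assumption.
    + right; simpl; ring.
Qed.

End GaltonWatson.

Lemma gw_moment2_le_mean_sq a N p t : 0 <= p <= 1 ->
  let A := INR a * (INR N * p) in 1 < A ->
  moment2 (gw_gen a N p t) ((a * N) ^ t) <= (A ^ t) ^ 2 * (1 + INR a / (A - 1)).
Proof.
  intros Hp A HA.
  set (var := INR a ^ 2 * (INR N * p * (1 - p))).
  assert (Hvar : 0 <= var <= INR a * A).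
  { unfold var, A; pose proof (pos_INR N); pose proof (pos_INR a).
    assert (0 <= INR N * p) by (apply Rmult_le_pos; lra).
    split; [apply Rmult_le_pos; [apply pow2_ge_0 | apply Rmult_le_pos; lra]|].
    assert (0 <= INR a * INR a * (INR N * p)) by (apply Rmult_le_pos; [apply Rmult_le_pos|]; lra).
    nra. }
  set (v := var / (A * (A - 1))).
  assert (Hv0 : 0 <= v) by (apply Rmult_le_pos; [lra | left; apply Rinv_0_lt_compat; nra]).
  assert (Hv : v <= INR a / (A - 1)).
  { unfold v; replace (INR a / (A - 1)) with (INR a * A / (A * (A - 1))) by (field; lra).
    apply Rmult_le_compat_r; [left; apply Rinv_0_lt_compat; nra | lra]. }
  eapply Rle_trans; [apply (gw_moment2_le a N p v) | ]; [| lra |].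
  { replace (_ - _) with var by (unfold var, A; ring); fold A; unfold v; field; lra. }
  fold A; assert (0 < A ^ t) by (apply pow_lt; lra).
  assert (0 <= (A ^ t) ^ 2) by apply pow2_ge_0.
  nra.
Qed.

Lemma mean_le_moment2 g K : (forall i, 0 <= g i) -> mean g K <= moment2 g K.
Proof.
  intros Hg; apply sum_Rle; intros i _; apply Rmult_le_compat_r; [apply Hg|].
  destruct i as [|i]; [simpl; lra|].
  rewrite S_INR; pose proof (pos_INR i); nra.
Qed.

(* Pointwise [i <= t/2 + i^2/(2t)] on [{i >= y}] and [i < y] off it; summing and
   taking [t = S/(E - y)] gives [(E - y)^2 <= S * Pr(X >= y)]. *)
Lemma paley_zygmund g K y : (forall i, 0 <= g i) -> mass g K = 1 ->
  0 <= y -> y < mean g K -> 0 < moment2 g K ->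
  (mean g K - y) ^ 2 / moment2 g K <=
  sum_f_R0 (fun i => if Rle_dec y (INR i) then g i else 0) K.
Proof.
  intros Hg H0 Hy HyE HS.
  set (E := mean g K) in *; set (S := moment2 g K) in *.
  set (P := sum_f_R0 _ K); set (t := S / (E - y)).
  assert (Ht : 0 < t) by (apply Rdiv_lt_0_compat; lra).
  assert (HE : E <= t / 2 * P + (/ (2 * t) * S + y * 1)).
  { rewrite <- H0; unfold E, S, P, mass, mean, moment2, expect.
    rewrite <- !sum_f_R0_scal_l, <- !plus_sum; apply sum_Rle; intros i _.
    assert (Hi2 : 0 <= / (2 * t) * (INR i ^ 2 * g i))
      by (apply Rmult_le_pos; [left; apply Rinv_0_lt_compat; lra |
                               apply Rmult_le_pos; [apply pow2_ge_0 | apply Hg]]).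
    pose proof (Hg i).
    destruct (Rle_dec y (INR i)).
    - assert (Hamgm : INR i <= t / 2 + / (2 * t) * INR i ^ 2).
      { assert (0 <= / (2 * t) * (INR i - t) ^ 2)
          by (apply Rmult_le_pos; [left; apply Rinv_0_lt_compat; lra | apply pow2_ge_0]).
        replace (t / 2 + / (2 * t) * INR i ^ 2) with
          (INR i + / (2 * t) * (INR i - t) ^ 2) by (field; lra); lra. }
      nra.
    - nra. }
  assert (Hhalf : / (2 * t) * S = (E - y) / 2) by (unfold t; field; lra).
  assert (HtP : E - y <= t * P) by lra.
  unfold t in HtP; apply Rmult_le_compat_r with (r := E - y) in HtP; [|lra].
  replace (S / (E - y) * P * (E - y)) with (P * S) in HtP by (field; lra).
  unfold Rdiv; apply Rmult_le_reg_r with S; [lra|].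
  replace ((E - y) ^ 2 * / S * S) with ((E - y) * (E - y)) by (field; lra); lra.
Qed.

Lemma gw_tail_ge a N p x y : 0 <= p <= 1 -> (1 <= a)%nat ->
  let A := INR a * (INR N * p) in
  1 < A -> 0 <= y -> 2 * y <= A ^ x ->
  (A - 1) / (4 * (A - 1 + INR a)) <= gw_tail a N p x y.
Proof.
  intros Hp Ha A HA Hy Hyx.
  destruct (gw_mass_mean a N p x) as [H0 H1]; fold A in H1.
  pose proof (gw_gen_nonneg a N p Hp x) as Hg.
  pose proof (gw_moment2_le_mean_sq a N p x Hp HA) as HS.
  pose proof (mean_le_moment2 _ ((a * N) ^ x) Hg) as HES.
  assert (HE : 0 < A ^ x) by (apply pow_lt; lra).
  assert (Ha0 : 0 < INR a) by (apply lt_0_INR; lia).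
  pose proof (paley_zygmund _ _ y Hg H0 Hy) as HPZ.
  rewrite H1 in HES, HPZ; fold A in HS.
  set (E := A ^ x) in *; set (S := moment2 _ _) in *.
  unfold gw_tail; eapply Rle_trans; [|apply HPZ; lra].
  apply Rle_trans with ((E / 2) ^ 2 / S).
  - apply Rle_trans with ((E / 2) ^ 2 / ((E ^ 2) * (1 + INR a / (A - 1)))).
    + right; field; lra.
    + apply Rmult_le_compat_l; [apply pow2_ge_0|].
      apply Rinv_le_contravar; [lra | exact HS].
  - apply Rmult_le_compat_r; [left; apply Rinv_0_lt_compat; lra|].
    apply pow_incr; lra.
Qed.

Lemma INR_Z_to_nat_Int_part r : 0 <= r ->
  r - 1 < INR (Z.to_nat (Int_part r)) <= r.
Proof.
  intros Hr; destruct (base_Int_part r) as [B1 B2].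
  assert (HZ : (-1 < Int_part r)%Z) by (apply lt_IZR; simpl; lra).
  rewrite INR_IZR_INZ, Z2Nat.id by lia; lra.
Qed.

Lemma ln_ge_1_sub_inv A : 0 < A -> 1 - / A <= ln A.
Proof.
  intros HA; pose proof (exp_ineq1_le (- ln A)) as H.
  rewrite exp_Ropp, exp_ln in H by exact HA; lra.
Qed.

Lemma ln_2_le_1 : ln 2 <= 1.
Proof.
  rewrite <- ln_exp; apply ln_le; [lra|].
  pose proof (exp_ineq1_le 1); lra.
Qed.

Lemma le_pow_of_ln y A x : 0 < y -> 0 < A -> ln y <= INR x * ln A -> y <= A ^ x.
Proof.
  intros Hy HA H; rewrite <- Rpower_pow, <- (exp_ln y) by assumption.
  destruct H as [H | ->]; [left; apply exp_increasing, H | right; reflexivity].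
Qed.

Lemma offspring_mean_near_1 a C N e es th :
  0 < a -> 0 < C -> 0 < e <= 1 -> 0 < th -> 0 <= es ->
  es + / C <= th * e / 2 -> (1 - es) * C - 1 < N <= (1 - es) * C ->
  1 + (1 - th) * e <= a * (N * ((1 + e) * / (a * C))) <= 1 + e.
Proof.
  intros Ha HC He Hth Hes Hsmall [HN1 HN2].
  replace (a * (N * ((1 + e) * / (a * C)))) with (N * / C * (1 + e)) by (field; lra).
  assert (HCC : C * / C = 1) by (field; lra).
  assert (HiC : 0 < / C) by (apply Rinv_0_lt_compat; lra).
  assert (Hup : N * / C <= 1) by (apply Rmult_le_compat_r with (r := / C) in HN2; nra).
  assert (Hlow : 1 - th * e / 2 <= N * / C)
    by (apply Rlt_le, Rmult_le_compat_r with (r := / C) in HN1; nra).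
  split; nra.
Qed.

Lemma ln_mean_ge A e th : 0 < e <= th -> th <= 1 / 2 ->
  1 + (1 - th) * e <= A <= 1 + e -> (1 - 2 * th) * e <= ln A.
Proof.
  intros He Hth HA; apply Rle_trans with (1 - / A); [|apply ln_ge_1_sub_inv; nra].
  replace (1 - / A) with ((A - 1) / A) by (field; nra).
  apply Rmult_le_reg_r with A; [nra|].
  replace ((A - 1) / A * A) with (A - 1) by (field; nra).
  assert (0 <= (1 - 2 * th) * e * (1 + e - A)) by (apply Rmult_le_pos; nra).
  assert (0 <= e * (th - e * (1 - 2 * th))) by (apply Rmult_le_pos; nra).
  nra.
Qed.

(* Over [x ~ L l / e] generations the relative loss [2 th] in [ln A] costs
   [2 th L l = c l / 2], which still leaves room for the factor [2]. *)
Lemma generation_log_growth L c e th l lnA (x : nat) :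
  0 < c <= L -> 0 < e <= 1 -> L * th = c / 4 -> th <= 1 / 2 ->
  (1 - 2 * th) * e <= lnA -> L / e * l - 1 < INR x -> 4 <= c * l ->
  ln 2 + (L - c) * l <= INR x * lnA.
Proof.
  intros Hc He HLth Hth HA Hx Hl.
  assert (Hl0 : 0 <= l) by nra.
  assert (HX : L * l - 1 <= L / e * l - 1).
  { apply Rplus_le_compat_r; replace (L / e * l) with (L * l * / e) by (field; lra).
    rewrite <- (Rmult_1_r (L * l)) at 1.
    apply Rmult_le_compat_l; [nra|].
    rewrite <- Rinv_1; apply Rinv_le_contravar; lra. }
  apply Rle_trans with ((L / e * l - 1) * ((1 - 2 * th) * e)).
  - replace ((L / e * l - 1) * ((1 - 2 * th) * e)) with
      (L * l - e - 2 * (th * (L * l)) + 2 * (th * e)) by (field; lra).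
    replace (th * (L * l)) with (c / 4 * l) by (rewrite <- HLth; ring).
    pose proof ln_2_le_1; assert (0 <= th * e) by nra; lra.
  - apply Rmult_le_compat; nra.
Qed.

Lemma tail_ratio_ge A a e r : 0 < e <= 1 -> 1 <= a -> e / 2 <= A - 1 <= e ->
  8 * (1 + a) <= r -> e / r <= (A - 1) / (4 * (A - 1 + a)).
Proof.
  intros He Ha HA Hr.
  apply Rle_trans with (e / (8 * (1 + a))).
  - apply Rmult_le_compat_l; [lra|]; apply Rinv_le_contravar; lra.
  - apply Rge_le, Rminus_ge; apply Rle_ge.
    replace ((A - 1) / (4 * (A - 1 + a)) - e / (8 * (1 + a))) with
      ((2 * (A - 1) * (1 + a) - e * (A - 1 + a)) / (8 * (A - 1 + a) * (1 + a)))
      by (field; lra).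
    apply Rmult_le_pos; [nra | left; apply Rinv_0_lt_compat; nra].
Qed.

Lemma offspring_prob_mean_bounds (a C n : nat) (e es th : R) :
  (1 <= a)%nat -> 0 < th <= 1 / 4 -> 0 < e < th -> 0 < es -> es / e < th / 4 ->
  (n <= C)%nat -> 4 / th <= e ^ 2 * INR n ->
  let p := (1 + e) * / (INR a * INR C) in
  let N := Z.to_nat (Int_part ((1 - es) * INR C)) in
  0 <= p <= 1 /\ 1 + (1 - th) * e <= INR a * (INR N * p) <= 1 + e.
Proof.
  intros Ha Hth He Hes0 Hes_ratio HnC Hne2 p N.
  assert (Ha1 : 1 <= INR a) by (apply (le_INR 1); exact Ha).
  assert (Hes : es < th * e / 4).
  { apply Rmult_lt_compat_r with (r := e) in Hes_ratio; [|lra].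
    replace (es / e * e) with es in Hes_ratio by (field; lra); lra. }
  assert (Hn : 0 < INR n) by (assert (0 < 4 / th) by (apply Rdiv_lt_0_compat; lra); nra).
  assert (Hne : 4 / th <= INR n * e).
  { assert (e ^ 2 * INR n <= e * INR n) by (apply Rmult_le_compat_r; nra); lra. }
  assert (HinvC : / INR C <= th * e / 4).
  { apply Rle_trans with (/ INR n); [apply Rinv_le_contravar, le_INR; assumption|].
    replace (th * e / 4) with (/ (4 / th / e)) by (field; lra).
    apply Rinv_le_contravar; [repeat apply Rdiv_lt_0_compat; lra|].
    apply Rle_div_l; lra. }
  assert (HC : 0 < INR C) by (apply le_INR in HnC; lra).
  assert (HC16 : 16 <= INR C).
  { assert (H : / INR C <= 1 / 16) by nra.
    apply Rmult_le_compat_l with (r := INR C) in H; [|lra].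
    rewrite Rinv_r in H by lra; lra. }
  split; [split; [apply Rdiv_le_0_compat; nra | apply Rle_div_l; nra]|].
  apply offspring_mean_near_1 with (es := es); try lra.
  apply INR_Z_to_nat_Int_part, Rmult_le_pos; nra.
Qed.

Lemma gw_tail_ge_at (a C n : nat) (s c e es : R) :
  (1 <= a)%nat -> 0 <= s -> 0 < c ->
  let th := c / (4 * (s + c)) in
  0 < e < th -> 0 < es -> es / e < th / 4 ->
  (n <= C)%nat -> 4 / th <= e ^ 2 * INR n -> 8 * (1 + INR a) <= c * ln (INR n) ->
  let p := (1 + e) * / (INR a * INR C) in
  let N := Z.to_nat (Int_part ((1 - es) * INR C)) in
  let x := Z.to_nat (Int_part ((s + c) / e * ln (INR n))) in
  e / Rpower (INR n) c <= gw_tail a N p x (Rpower (INR n) s).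
Proof.
  intros Ha Hs Hc th He Hes0 Hes HnC Hne Hln p N x.
  assert (Ha1 : 1 <= INR a) by (apply (le_INR 1); exact Ha).
  assert (Hth : 0 < th <= 1 / 4) by
    (unfold th; split; [apply Rdiv_lt_0_compat | apply Rle_div_l]; lra).
  assert (HLth : (s + c) * th = c / 4) by (unfold th; field; lra).
  assert (Hl : 0 < ln (INR n)) by nra.
  destruct (offspring_prob_mean_bounds a C n e es th Ha Hth He Hes0 Hes HnC Hne)
    as [Hp HA]; fold p N in Hp, HA; set (A := INR a * (INR N * p)) in *.
  assert (Hgrowth : 2 * Rpower (INR n) s <= A ^ x).
  { assert (HlnA := ln_mean_ge A e th ltac:(lra) ltac:(lra) HA).
    assert (HX := INR_Z_to_nat_Int_part ((s + c) / e * ln (INR n))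
                    ltac:(apply Rmult_le_pos; [apply Rlt_le, Rdiv_lt_0_compat|]; lra)).
    fold x in HX.
    apply le_pow_of_ln; [apply Rmult_lt_0_compat; [lra | apply exp_pos] | nra |].
    rewrite ln_mult, ln_Rpower by (lra || apply exp_pos).
    replace s with (s + c - c) at 1 by ring.
    apply (generation_log_growth (s + c) c e th); lra. }
  apply Rle_trans with ((A - 1) / (4 * (A - 1 + INR a))).
  - apply tail_ratio_ge; [lra | lra | nra |].
    unfold Rpower; pose proof (exp_ineq1_le (c * ln (INR n))); lra.
  - apply gw_tail_ge; [exact Hp | exact Ha | change (1 < A); nra | | exact Hgrowth].
    left; apply exp_pos.
Qed.

Lemma eventually_lt_of_lim_0 u r : is_lim_seq u 0 -> 0 < r -> eventually (fun n => u n < r).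
Proof.
  intros Hu Hr; apply is_lim_seq_spec in Hu.
  apply (filter_imp (fun n => Rabs (u n - 0) < r)); [|exact (Hu (mkposreal r Hr))].
  intros n Hn; rewrite Rminus_0_r in Hn; exact (Rle_lt_trans _ _ _ (Rle_abs _) Hn).
Qed.

Lemma eventually_ln_INR_ge M : eventually (fun n => M <= ln (INR n)).
Proof.
  pose proof is_lim_seq_INR as H; apply is_lim_seq_spec in H.
  apply (filter_imp (fun n => exp M < INR n)); [|apply H].
  intros n Hn; rewrite <- (ln_exp M); apply Rlt_le, ln_increasing; [apply exp_pos | exact Hn].
Qed.

Lemma Rpower_le_self x q : 1 <= x -> q <= 1 -> Rpower x q <= x.
Proof. intros Hx Hq; rewrite <- (Rpower_1 x) at 2 by lra; apply Rle_Rpower; assumption. Qed.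

Theorem lemma7p3 (j k : nat) (delta c : R) (eps epsS : nat -> R) :
  (1 <= j)%nat -> (j < k)%nat ->
  0 < delta < 1 / 6 -> 0 < c ->
  (forall n, 0 < eps n) -> (forall n, 0 < epsS n) ->
  is_lim_seq eps 0 ->
  is_lim_seq (fun n => eps n ^ 3 * INR n ^ j) p_infty ->
  is_lim_seq (fun n => eps n ^ 2 * Rpower (INR n) (1 - 2 * delta)) p_infty ->
  is_lim_seq (fun n => Rpower (INR n) (- / 2 + delta) / epsS n) 0 ->
  is_lim_seq (fun n => epsS n / eps n) 0 ->
  exists n0 : nat, forall n : nat, (n0 <= n)%nat ->
    let a := (binom k j - 1)%nat in
    let p0 := / (INR a * INR (binom n (k - j))) in
    let p := (1 + eps n) * p0 in
    let N := Z.to_nat (Int_part ((1 - epsS n) * INR (binom n (k - j)))) in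
    let x := Z.to_nat (Int_part ((INR j - 1 + delta + c) / eps n * ln (INR n))) in
    gw_tail a N p x (Rpower (INR n) (INR j - 1 + delta))
      >= eps n / Rpower (INR n) c.
Proof.
  intros Hj Hjk Hdelta Hc Heps HepsS Leps _ Lsq _ Lratio.
  set (a := (binom k j - 1)%nat); set (s := INR j - 1 + delta).
  set (th := c / (4 * (s + c))).
  assert (Ha : (1 <= a)%nat) by (pose proof (binom_ge k j Hj Hjk); unfold a; lia).
  assert (Hs : 0 <= s) by (unfold s; apply (le_INR 1) in Hj; simpl in Hj; lra).
  assert (Hth : 0 < th) by (unfold th; apply Rdiv_lt_0_compat; lra).
  apply is_lim_seq_spec in Lsq.
  assert (Hev : eventually (fun n => eps n < th /\ epsS n / eps n < th / 4 /\
      4 / th < eps n ^ 2 * Rpower (INR n) (1 - 2 * delta) /\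
      8 * (1 + INR a) <= c * ln (INR n) /\ (k < n)%nat)).
  { repeat apply filter_and.
    - apply eventually_lt_of_lim_0; assumption.
    - apply eventually_lt_of_lim_0; [assumption | lra].
    - apply Lsq.
    - apply (filter_imp (fun n => 8 * (1 + INR a) / c <= ln (INR n)));
        [|apply eventually_ln_INR_ge].
      intros n Hn; apply Rle_div_l in Hn; lra.
    - exists (S k); intros; lia. }
  destruct Hev as [n0 Hn0]; exists n0; intros n Hn.
  destruct (Hn0 n Hn) as (He & Hes & Hsq & Hln & Hkn).
  assert (Hn1 : 1 <= INR n) by (apply (le_INR 1); lia).
  apply Rle_ge, gw_tail_ge_at; try assumption; try lra.
  - split; [apply Heps | assumption].
  - apply HepsS.
  - apply binom_ge; lia.
  - eapply Rle_trans; [apply Rlt_le, Hsq|].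
    apply Rmult_le_compat_l; [apply pow2_ge_0 | apply Rpower_le_self; lra].
Qed.
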